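(* For every cubic graph $G$, $\nu_3(G) \geq \frac{7}{6}\cdot |V(G)|$.
   Context: Graphs are finite, without loops, possibly with multiple edges; a graph is cubic if every vertex has degree $3$. For $k\geq 1$, $\nu_k(G)$ is the maximum number of edges of a $k$-edge-colorable subgraph of $G$. *)

From mathcomp Require Import all_boot.
Set Implicit Arguments. Unset Strict Implicit. Unset Printing Implicit Defensive.

(* A finite multigraph: vertex type V, edge type E, each edge e has two
   endpoints src e and dst e.  Parallel edges are allowed (E is arbitrary). *)
Section Multigraph.
Variables (V E : finType) (src dst : E -> V).

Definition loopless : Prop := forall e : E, src e != dst e.

Definition incident (e : E) (v : V) : bool := (src e == v) || (dst e == v).

(* degree of v = number of edges incident to v (each edge counts once,
   as there are no loops) *)
Definition deg (v : V) : nat := #|[set e : E | incident e v]|.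

Definition cubic : Prop := forall v : V, deg v = 3.

Definition adjacent_edges (e f : E) : bool := [exists v : V, incident e v && incident f v].

Definition k_edge_colorable (k : nat) (F : {set E}) : bool :=
  [exists c : {ffun E -> 'I_k},
    [forall e in F, forall f in F,
       ((e != f) && adjacent_edges e f) ==> (c e != c f)]].

Definition nu (k : nat) : nat :=
  \max_(F : {set E} | k_edge_colorable k F) #|F|.

End Multigraph.

From mathcomp Require Import all_boot.
From mathcomp Require Import zify.
Set Implicit Arguments. Unset Strict Implicit. Unset Printing Implicit Defensive.

(* Fix a maximum 3-edge-colourable subgraph F.  A Kempe-chain argument shows
   that every vertex meets at most one edge outside F, so the uncoloured
   edges form a matching covering 2|E \ F| vertices.  An uncoloured edge g
   can be shifted: colour it with a colour s missing at one end and uncolour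
   the s-coloured edge h at the other end.  The result is again maximum, so
   by the matching property every edge at the far end of h is coloured; this
   far end depends injectively on g.  Hence 3|E \ F| <= |V|, and since
   2|E| = 3|V| for cubic graphs, |F| >= 3|V|/2 - |V|/3 = 7|V|/6. *)

Section InvolutionOrbits.
Variables (T : finType) (h k : T -> T).
Hypotheses (hK : involutive h) (kK : involutive k).

Local Notation f := (k \o h).

Lemma comp_involutions_inj : injective f.
Proof. by apply: inj_comp; apply: inv_inj. Qed.

Lemma iter_comp_conj i z : iter i f (h (iter i f z)) = h z.
Proof.
have fhf p : f (h (f p)) = h p by rewrite /= hK kK.
elim: i => [|i IH] //.
by rewrite iterSr -[iter i.+1 f z]/(f (iter i f z)) fhf.
Qed.

Variable z : T.
Hypothesis hz : h z = z.

Lemma fconnect_fixed_h y : fconnect f z y -> fconnect f z (h y).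
Proof.
move=> zy; rewrite fconnect_sym; last exact: comp_involutions_inj.
have := iter_comp_conj (findex f z y) z; rewrite iter_findex // hz => <-.
exact: fconnect_iter.
Qed.

Lemma fconnect_fixed_k y : fconnect f z y -> fconnect f z (k y).
Proof.
move=> zy; have -> : k y = f (h y) by rewrite /= hK.
exact: connect_trans (fconnect_fixed_h zy) (fconnect1 _ _).
Qed.

Lemma findex_fixed_h y : fconnect f z y -> h y = y ->
  findex f z y = 0 \/ findex f z y + findex f z y = order f z.
Proof.
move=> zy hy; set i := findex f z y; set N := order f z.
have iN : i < N := findex_max zy.
have yi : iter i f z = y := iter_findex zy.
have zii : iter (i + i) f z = z by rewrite iterD yi -{1}hy -yi iter_comp_conj hz.
case: (ltnP (i + i) N) => iiN.
  left; have := findex_iter iiN; rewrite zii findex0 => /eqP.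
  by rewrite eq_sym addn_eq0 => /andP[/eqP].
right; have iiN' : i + i - N < N by lia.
have : iter (i + i) f z = iter (i + i - N) f z.
  by rewrite -{1}(subnK iiN) iterD iter_order //; exact: comp_involutions_inj.
rewrite zii => ziiN; have := findex_iter iiN'; rewrite -ziiN findex0 => /eqP.
by lia.
Qed.

Lemma orbit_fixed_h y1 y2 : fconnect f z y1 -> fconnect f z y2 ->
  h y1 = y1 -> h y2 = y2 -> [\/ y1 = z, y2 = z | y1 = y2].
Proof.
move=> zy1 zy2 hy1 hy2.
have [i1|i1] := findex_fixed_h zy1 hy1.
  by apply: Or31; rewrite -(iter_findex zy1) i1.
have [i2|i2] := findex_fixed_h zy2 hy2.
  by apply: Or32; rewrite -(iter_findex zy2) i2.
apply: Or33; rewrite -(iter_findex zy1) -(iter_findex zy2).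
by have -> : findex f z y1 = findex f z y2 by lia.
Qed.

End InvolutionOrbits.

Section SubcubicColorings.
Variables (V E : finType) (src dst : E -> V).
Hypothesis loopless_G : loopless src dst.
Hypothesis deg_le3 : forall v, deg src dst v <= 3.

Implicit Types (F G : {set E}) (c : {ffun E -> 'I_3}) (s t : 'I_3) (e g : E) (v w : V).

Local Notation inc := (incident src dst).
Local Notation adj := (adjacent_edges src dst).
Local Notation colorable := (k_edge_colorable src dst 3).

Definition proper F c : Prop :=
  forall e f, e \in F -> f \in F -> e != f -> adj e f -> c e != c f.

Definition present F c v s := [exists e, [&& e \in F, inc e v & c e == s]].

Definition optimal F c := proper F c /\ forall F', colorable F' -> #|F'| <= #|F|.

Lemma colorableP F : reflect (exists c, proper F c) (colorable F).
Proof.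
apply: (iffP existsP) => -[c Hc]; exists c.
- move=> e f eF fF nef aef.
  by have /implyP := forall_inP (forall_inP Hc e eF) f fF; apply; rewrite nef.
- apply/forall_inP=> e eF; apply/forall_inP=> f fF; apply/implyP=> /andP[].
  exact: Hc.
Qed.

Lemma adjP e f : reflect (exists v, inc e v /\ inc f v) (adj e f).
Proof.
apply: (iffP existsP) => [[v /andP[]]|[v []]]; first by exists v.
by move=> *; exists v; apply/andP.
Qed.

Lemma adjC e f : adj e f = adj f e.
Proof. by apply/adjP/adjP=> -[v [] *]; exists v. Qed.

Lemma inc_adj e f v : inc e v -> inc f v -> adj e f.
Proof. by move=> *; apply/adjP; exists v. Qed.

Lemma proper_subset F G c : G \subset F -> proper F c -> proper G c.
Proof. by move=> /subsetP sGF Hc e f eG fG; apply: Hc; apply: sGF. Qed.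

Lemma no_four_incident v e1 e2 e3 e4 :
  inc e1 v -> inc e2 v -> inc e3 v -> inc e4 v ->
  e1 != e2 -> e1 != e3 -> e1 != e4 -> e2 != e3 -> e2 != e4 -> e3 != e4 -> False.
Proof.
move=> i1 i2 i3 i4 n12 n13 n14 n23 n24 n34.
have u : uniq [:: e1; e2; e3; e4] by rewrite /= !inE !negb_or n12 n13 n14 n23 n24 n34.
have : #|[:: e1; e2; e3; e4]| <= deg src dst v.
  by apply: subset_leq_card; apply/subsetP=> e; rewrite !inE => /or4P[]/eqP->.
by rewrite (card_uniqP u) => /leq_trans/(_ (deg_le3 v)).
Qed.

Definition other_end e v := if src e == v then dst e else src e.

Lemma other_end_inc e v : inc e (other_end e v).
Proof. by rewrite /other_end /incident; case: ifP; rewrite eqxx ?orbT. Qed.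

Lemma other_endK e v : inc e v -> other_end e (other_end e v) = v.
Proof.
rewrite /incident /other_end; case: (eqVneq (src e) v) => [<-|ne] /=.
  by rewrite (negbTE (loopless_G e)).
by move/eqP=> <-; rewrite eqxx.
Qed.

Lemma other_end_neq e v : inc e v -> other_end e v != v.
Proof.
rewrite /incident /other_end; case: (eqVneq (src e) v) => [<-|ne] _ //=.
by rewrite eq_sym; apply: loopless_G.
Qed.

Lemma incP e v : inc e v ->
  (src e = v /\ dst e = other_end e v) \/ (dst e = v /\ src e = other_end e v).
Proof.
rewrite /incident /other_end; case: (eqVneq (src e) v) => [->|ne] /=; first by left.
by move/eqP=> <-; right.
Qed.

Lemma proper_color_inj F c e f v : proper F c -> e \in F -> f \in F ->
  inc e v -> inc f v -> c e = c f -> e = f.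
Proof.
move=> Hc eF fF ev fv cef; apply/eqP/negPn/negP => nef.
by have := Hc e f eF fF nef (inc_adj ev fv); rewrite cef eqxx.
Qed.

Lemma neq_color c e f : c e != c f -> e != f.
Proof. by apply: contra => /eqP->. Qed.

Lemma neq_notin F e f : e \in F -> f \notin F -> e != f.
Proof. by move=> eF; apply: contra => /eqP<-. Qed.

Definition extend c g s := [ffun e => if e == g then s else c e].

Lemma proper_extend F c g s : proper F c -> g \notin F ->
  (forall e, e \in F -> adj g e -> c e != s) -> proper (g |: F) (extend c g s).
Proof.
move=> Hc gF Hs e f; rewrite !inE => /predU1P[->|eF] /predU1P[->|fF];
  rewrite ?eqxx // !ffunE ?eqxx.
- by move=> _ a; rewrite (negbTE (neq_notin fF gF)) eq_sym; exact: Hs.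
- by move=> _ a; rewrite (negbTE (neq_notin eF gF)); apply: Hs; rewrite // adjC.
- move=> nef a; rewrite (negbTE (neq_notin eF gF)) (negbTE (neq_notin fF gF)).
  exact: Hc.
Qed.

Definition c0 : 'I_3 := @Ordinal 3 0 isT.
Definition c1 : 'I_3 := @Ordinal 3 1 isT.
Definition c2 : 'I_3 := @Ordinal 3 2 isT.

Lemma two_other_colors t : exists a b : 'I_3, [/\ a != t, b != t & a != b].
Proof.
by case: t => [[|[|[|m]]] Hm] //; [exists c1, c2 | exists c0, c2 | exists c0, c1].
Qed.

Lemma missing_color F c g v : g \notin F -> inc g v -> exists s, ~~ present F c v s.
Proof.
move=> gF gv; case: (pickP (fun s => ~~ present F c v s)) => [s Hs|H].
  by exists s.
have P s : present F c v s by have := H s; rewrite /= => /negbFE.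
case/existsP: (P c0) => f0 /and3P[f0F i0 /eqP k0].
case/existsP: (P c1) => f1 /and3P[f1F i1 /eqP k1].
case/existsP: (P c2) => f2 /and3P[f2F i2 /eqP k2].
exfalso; apply: (no_four_incident i0 i1 i2 gv); rewrite ?(neq_notin _ gF) //;
  apply: (@neq_color c); by rewrite ?k0 ?k1 ?k2.
Qed.

Lemma optimal_no_common_missing F c g v s : optimal F c -> g \notin F -> inc g v ->
  ~~ present F c v s -> ~~ present F c (other_end g v) s -> False.
Proof.
move=> [Hc Hmax] gF gv nv nw.
suff : colorable (g |: F) by move/Hmax; rewrite cardsU1 gF add1n ltnn.
have {nv nw} [ns nd] : ~~ present F c (src g) s /\ ~~ present F c (dst g) s.
  by have [[-> ->]|[-> ->]] := incP gv.
apply/colorableP; exists (extend c g s).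
apply: proper_extend => // e eF /adjP [u [gu eu]]; apply/negP => /eqP ces.
move: gu; rewrite /incident => /orP[] /eqP ue; [move/negP: ns | move/negP: nd];
  by apply; apply/existsP; exists e; rewrite eF ue eu ces eqxx.
Qed.

Lemma one_present_color F c v g1 g2 s t : g1 \notin F -> g2 \notin F -> g1 != g2 ->
  inc g1 v -> inc g2 v -> present F c v s -> present F c v t -> s = t.
Proof.
move=> g1F g2F n12 i1 i2 /existsP[f1 /and3P[f1F j1 /eqP k1]]
  /existsP[f2 /and3P[f2F j2 /eqP k2]].
apply/eqP/negPn/negP => nst.
apply: (no_four_incident i1 i2 j1 j2 n12); last 1 first.
  by apply: (@neq_color c); rewrite k1 k2.
all: by rewrite eq_sym (neq_notin f1F, neq_notin f2F).
Qed.

Section KempeSwap.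
Variables (F : {set E}) (c : {ffun E -> 'I_3}) (a b : 'I_3).
Hypotheses (proper_c : proper F c) (neq_ab : a != b).

Definition follow s v :=
  if [pick e | [&& e \in F, inc e v & c e == s]] is Some e then other_end e v else v.

Lemma follow_edge s v e : e \in F -> inc e v -> c e = s -> follow s v = other_end e v.
Proof.
move=> eF ev ce; rewrite /follow; case: pickP => [f /and3P[fF fv /eqP cf]|H].
  by rewrite (proper_color_inj proper_c fF eF fv ev) // cf ce.
by have := H e; rewrite eF ev ce eqxx.
Qed.

Lemma follow_missing s v : ~~ present F c v s -> follow s v = v.
Proof.
move=> np; rewrite /follow; case: pickP => [f Hf|//].
by move/negP: np; case; apply/existsP; exists f.
Qed.

Lemma followK s : involutive (follow s).
Proof.
move=> v; case: (boolP (present F c v s)) => [/existsP[e /and3P[eF ev /eqP ce]]|np].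
  rewrite (follow_edge eF ev ce) (follow_edge eF (other_end_inc e v) ce).
  exact: other_endK.
by rewrite !follow_missing.
Qed.

(* A state (v, true) (resp. (v, false)) is at v about to leave along its
   a-edge (resp. b-edge).  The orbits of [flip \o step] then run along the
   a/b-alternating paths and cycles of c, and the fixed points of [step] are
   the ends of the paths. *)
Definition pair_color (t : bool) := if t then a else b.
Definition step (p : V * bool) := (follow (pair_color p.2) p.1, p.2).
Definition flip (p : V * bool) := (p.1, ~~ p.2).

Lemma stepK : involutive step.
Proof. by case=> v t; rewrite /step /= followK. Qed.

Lemma flipK : involutive flip.
Proof. by case=> v t; rewrite /flip /= negbK. Qed.

Local Notation kempe := (flip \o step).

Definition in_chain z e :=
  [&& e \in F, (c e == a) || (c e == b) & fconnect kempe z (src e, c e == a)].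

Definition swap_color t := if t == a then b else a.

Definition kempe_swap z := [ffun e => if in_chain z e then swap_color (c e) else c e].

Lemma swap_color_ab t : (swap_color t == a) || (swap_color t == b).
Proof. by rewrite /swap_color; case: ifP; rewrite eqxx ?orbT. Qed.

Lemma eq_ba : (b == a) = false.
Proof. by rewrite eq_sym (negbTE neq_ab). Qed.

Lemma neq_ab_eq_a t1 t2 : (t1 == a) || (t1 == b) -> (t2 == a) || (t2 == b) ->
  t1 != t2 -> (t2 == a) = ~~ (t1 == a).
Proof. by move=> /orP[]/eqP-> /orP[]/eqP->; rewrite ?eqxx ?eq_ba. Qed.

Lemma swap_color_neq t1 t2 : (t1 == a) || (t1 == b) -> (t2 == a) || (t2 == b) ->
  t1 != t2 -> swap_color t1 != swap_color t2.
Proof.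
by move=> /orP[]/eqP-> /orP[]/eqP->; rewrite /swap_color ?eqxx ?eq_ba // eq_sym.
Qed.

Lemma swap_color_eq_a t : (t == a) || (t == b) -> swap_color t = a -> t = b.
Proof. by rewrite /swap_color; case: eqP => [->|_] /orP[]/eqP //; rewrite eqxx. Qed.

Lemma step_src e : e \in F -> (c e == a) || (c e == b) ->
  step (src e, c e == a) = (dst e, c e == a).
Proof.
move=> eF cab; rewrite /step /=.
have -> : pair_color (c e == a) = c e.
  by rewrite /pair_color; case: eqP => [->//|ne]; case/orP: cab => /eqP.
by rewrite (follow_edge eF (_ : inc e (src e))) /other_end ?eqxx // /incident eqxx.
Qed.

Lemma in_chain_end z e v : step z = z -> e \in F -> (c e == a) || (c e == b) ->
  inc e v -> fconnect kempe z (v, c e == a) = fconnect kempe z (src e, c e == a).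
Proof.
move=> hz eF cab; rewrite /incident => /orP[/eqP<- //|/eqP<-].
apply/idP/idP => H.
- by rewrite -(stepK (src e, _)) step_src //; exact: (fconnect_fixed_h stepK flipK hz H).
- by rewrite -step_src //; exact: (fconnect_fixed_h stepK flipK hz H).
Qed.

Lemma kempe_swap_proper z : step z = z -> proper F (kempe_swap z).
Proof.
move=> hz e f eF fF nef aef; rewrite !ffunE.
have cef := proper_c eF fF nef aef.
case/adjP: (aef) => v [ev fv].
have chainE g : g \in F -> inc g v ->
    in_chain z g = ((c g == a) || (c g == b)) && fconnect kempe z (v, c g == a).
  move=> gF gv; rewrite /in_chain gF /=; case cab: (_ || _) => //=.
  by rewrite (in_chain_end hz gF cab gv).
have mixed g1 g2 : g1 \in F -> g2 \in F -> inc g1 v -> inc g2 v ->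
    c g1 != c g2 -> in_chain z g1 -> ~~ in_chain z g2 -> swap_color (c g1) != c g2.
  move=> g1F g2F i1 i2 c12; rewrite chainE // => /andP[cab1 O1] S2.
  case cab2: ((c g2 == a) || (c g2 == b)).
    exfalso; move/negP: S2; apply; rewrite chainE // cab2 /=.
    by rewrite (neq_ab_eq_a cab1 cab2 c12); exact: (fconnect_fixed_k stepK flipK hz O1).
  by apply/negP => /eqP E'; move: cab2; rewrite -E' swap_color_ab.
case Se: (in_chain z e); case Sf: (in_chain z f) => //.
- by apply: swap_color_neq => //; [case/and3P: Se | case/and3P: Sf].
- by apply: (mixed e f) => //; rewrite Sf.
- by rewrite eq_sym; apply: (mixed f e) => //; rewrite ?Se // eq_sym.
Qed.

Lemma kempe_swap_missing_start v : ~~ present F c v b ->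
  ~~ present F (kempe_swap (v, false)) v a.
Proof.
move=> nb; apply/negP => /existsP[e /and3P[eF ev /eqP ce]].
have hz : step (v, false) = (v, false) by rewrite /step /= /pair_color follow_missing.
move: ce; rewrite ffunE; case Se: (in_chain _ e) => ce.
- move: Se => /and3P[_ cab _]; have ceb := swap_color_eq_a cab ce.
  by move/negP: nb; apply; apply/existsP; exists e; rewrite eF ev ceb eqxx.
- have cab : (c e == a) || (c e == b) by rewrite ce eqxx.
  move: Se; rewrite /in_chain eF cab -(in_chain_end hz eF cab ev) ce eqxx /=.
  have := fconnect_fixed_k stepK flipK hz (connect0 _ (v, false)).
  by rewrite /flip /= => ->.
Qed.

Lemma kempe_swap_missing_off z w : step z = z -> ~~ present F c w a ->
  ~~ fconnect kempe z (w, true) -> ~~ present F (kempe_swap z) w a.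
Proof.
move=> hz na nO; apply/negP => /existsP[e /and3P[eF ew /eqP ce]].
move: ce; rewrite ffunE; case Se: (in_chain _ e) => ce.
- move: Se => /and3P[_ cab Oe]; have ceb := swap_color_eq_a cab ce.
  move: Oe; rewrite -(in_chain_end hz eF cab ew) ceb eq_ba => Oe.
  by move/negP: nO; apply; have := fconnect_fixed_k stepK flipK hz Oe.
- by move/negP: na; apply; apply/existsP; exists e; rewrite eF ew ce eqxx.
Qed.

End KempeSwap.

(* Otherwise swapping the a/s-chain starting at the far end of g would make
   a missing at both ends of g, contradicting optimality. *)
Lemma optimal_alternating_path F c a s g u : optimal F c -> a != s ->
  g \notin F -> inc g u -> ~~ present F c u a -> ~~ present F c (other_end g u) s ->
  fconnect (flip \o step F c a s) (u, true) (other_end g u, false).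
Proof.
move=> [Hc Hmax] neq_as gF gu na ms.
rewrite fconnect_sym; last exact: comp_involutions_inj (stepK a s Hc) flipK.
apply/negPn/negP => nO.
have hz : step F c a s (other_end g u, false) = (other_end g u, false).
  by rewrite /step /= /pair_color follow_missing.
have Hc' := kempe_swap_proper Hc neq_as hz.
have ma1 := kempe_swap_missing_start a Hc ms.
have ma2 := kempe_swap_missing_off Hc neq_as hz na nO.
exact: (optimal_no_common_missing (conj Hc' Hmax) gF gu ma2 ma1).
Qed.

Lemma optimal_uncolored_matching F c u e1 e2 : optimal F c ->
  inc e1 u -> inc e2 u -> e1 \notin F -> e2 \notin F -> e1 = e2.
Proof.
move=> Ho i1 i2 n1 n2; apply/eqP/negPn/negP => n12.
have [Hc _] := Ho.
have [s1 m1] := missing_color c n1 (other_end_inc e1 u).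
have [s2 m2] := missing_color c n2 (other_end_inc e2 u).
have present_at_u e s : e \notin F -> inc e u ->
    ~~ present F c (other_end e u) s -> present F c u s.
  move=> eF eu ms; case: (boolP (present F c u s)) => // nu.
  by case: (optimal_no_common_missing Ho eF eu nu ms).
have p1 := present_at_u _ _ n1 i1 m1.
have p2 := present_at_u _ _ n2 i2 m2.
have onec := one_present_color (c := c) n1 n2 n12 i1 i2.
move: m2; rewrite (onec _ _ p2 p1) => m2.
have na t : t != s1 -> ~~ present F c u t.
  by move=> ts; apply/negP => pt; move/eqP: ts; apply; apply: onec.
have [a [b [as1 bs1 ab]]] := two_other_colors s1.
have ends_neq : other_end e1 u != other_end e2 u.
  apply/negP => /eqP E12.
  have j2 : inc e2 (other_end e1 u) by rewrite E12 other_end_inc.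
  have j1 := other_end_inc e1 u.
  case: (boolP (present F c (other_end e1 u) a)) => pa; last first.
    by move/(present_at_u _ _ n1 i1): pa; apply/negP; apply: na.
  case: (boolP (present F c (other_end e1 u) b)) => pb; last first.
    by move/(present_at_u _ _ n1 i1): pb; apply/negP; apply: na.
  by move/eqP: ab; apply; apply: (one_present_color n1 n2 n12 j1 j2 pa pb).
have fixed_end g : ~~ present F c (other_end g u) s1 ->
    step F c a s1 (other_end g u, false) = (other_end g u, false).
  by move=> ms; rewrite /step /= /pair_color follow_missing.
have hu : step F c a s1 (u, true) = (u, true).
  by rewrite /step /= /pair_color follow_missing // na.
(* u misses a and both far ends miss s1: the a/s1-path from u cannot end at both. *)
have C1 := optimal_alternating_path Ho as1 n1 i1 (na a as1) m1.
have C2 := optimal_alternating_path Ho as1 n2 i2 (na a as1) m2.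
have := orbit_fixed_h (stepK a s1 Hc) flipK hu C1 C2 (fixed_end _ m1) (fixed_end _ m2).
by case=> // -[E12]; move/eqP: ends_neq.
Qed.

Lemma optimal_shift F c g s h : optimal F c -> g \notin F ->
  ~~ present F c (dst g) s -> h \in F -> inc h (src g) -> c h = s ->
  optimal (g |: (F :\ h)) (extend c g s).
Proof.
move=> [Hc Hmax] gF ns hF hg ch; split.
- apply: proper_extend.
  + exact: proper_subset (subsetDl F [set h]) Hc.
  + by rewrite !inE (negbTE gF) andbF.
  + move=> e; rewrite !inE => /andP[neh eF] /adjP[v [gv ev]]; apply/eqP => ces.
    move: gv; rewrite /incident => /orP[]/eqP ve.
    * move/eqP: neh; apply; apply: (proper_color_inj Hc eF hF _ hg); first by rewrite ve.
      by rewrite ces ch.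
    * by move/negP: ns; apply; apply/existsP; exists e; rewrite eF ve ev ces eqxx.
- have -> : #|g |: (F :\ h)| = #|F|.
    by rewrite cardsU1 (cardsD1 h F) hF !inE (negbTE gF) andbF.
  exact: Hmax.
Qed.

(* After the shift, h is uncoloured and meets the far end of h, so by the
   matching property every other edge there is coloured. *)
Lemma optimal_shift_saturated F c g s h g' : optimal F c -> g \notin F ->
  ~~ present F c (dst g) s -> h \in F -> inc h (src g) -> c h = s ->
  inc g' (other_end h (src g)) -> g' \in F.
Proof.
move=> Ho gF ns hF hg ch hg'; apply: contraT => g'F; exfalso.
have Ho' := optimal_shift Ho gF ns hF hg ch.
have hn : h \notin g |: (F :\ h).
  by rewrite !inE negb_or negb_and eqxx /= andbT (neq_notin hF gF).
have g'n : g' \notin g |: (F :\ h).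
  rewrite !inE negb_or negb_and g'F orbT andbT.
  apply/eqP => g'g; move: hg'; rewrite g'g /incident => /orP[]/eqP gw.
  - by move: (other_end_neq hg); rewrite -gw eqxx.
  - move/negP: ns; apply; apply/existsP; exists h.
    by rewrite hF gw other_end_inc ch eqxx.
have := optimal_uncolored_matching Ho' (other_end_inc h (src g)) hg' hn g'n.
by move=> hg'E; move: hF; rewrite hg'E (negbTE g'F).
Qed.

Definition free_color F c g := odflt c0 [pick s | ~~ present F c (dst g) s].

Definition pivot F c g :=
  [pick h | [&& h \in F, inc h (src g) & c h == free_color F c g]].

Definition partner F c g :=
  if pivot F c g is Some h then other_end h (src g) else src g.

Lemma partnerP F c g : optimal F c -> g \notin F ->
  exists s h, [/\ ~~ present F c (dst g) s, h \in F, inc h (src g), c h = s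
               & partner F c g = other_end h (src g)].
Proof.
move=> Ho gF.
have ms : ~~ present F c (dst g) (free_color F c g).
  rewrite /free_color; case: pickP => [s //|H].
  have gd : inc g (dst g) by rewrite /incident eqxx orbT.
  have [s ms] := missing_color c gF gd.
  by have := H s; rewrite /= ms.
rewrite /partner /pivot; case: pickP => [h /and3P[hF hg /eqP ch]|H].
  by exists (free_color F c g), h.
have gs : inc g (src g) by rewrite /incident eqxx.
case: (boolP (present F c (src g) (free_color F c g))) => [|ns].
  by case/existsP => h Hh; have := H h; rewrite Hh.
have [[_ gd]|[sd _]] := incP gs; last by have := loopless_G g; rewrite sd eqxx.
by case: (optimal_no_common_missing Ho gF gs ns); rewrite -gd.
Qed.

Lemma partner_saturated F c g g' : optimal F c -> g \notin F ->
  inc g' (partner F c g) -> g' \in F.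
Proof.
move=> Ho gF; have [s [h [ms hF hg ch ->]]] := partnerP Ho gF.
exact: optimal_shift_saturated Ho gF ms hF hg ch.
Qed.

Lemma partner_inj F c g1 g2 : optimal F c -> g1 \notin F -> g2 \notin F ->
  partner F c g1 = partner F c g2 -> g1 = g2.
Proof.
move=> Ho n1 n2.
have [s1 [h1 [m1 h1F i1 c1 ->]]] := partnerP Ho n1.
have [s2 [h2 [m2 h2F i2 c2 ->]]] := partnerP Ho n2 => Ew.
have [Hc _] := Ho.
apply/eqP; apply: contraT => n12; exfalso.
case: (eqVneq s1 s2) => [Es|ns].
- have Eh : h1 = h2.
    apply: (proper_color_inj Hc h1F h2F (other_end_inc h1 (src g1))).
      by rewrite Ew other_end_inc.
    by rewrite c1 c2 Es.
  have Esrc : src g1 = src g2 by rewrite -(other_endK i1) Ew Eh (other_endK i2).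
  have j1 : inc g1 (src g1) by rewrite /incident eqxx.
  have j2 : inc g2 (src g1) by rewrite Esrc /incident eqxx.
  by move/eqP: n12; apply; apply: (optimal_uncolored_matching Ho j1 j2 n1 n2).
- (* shifting g1 leaves the data of g2 intact, and h1 becomes an uncoloured
     edge at the far end of h2 *)
  have Ho' := optimal_shift Ho n1 m1 h1F i1 c1.
  have g2n : g2 \notin g1 |: (F :\ h1).
    by rewrite !inE negb_or eq_sym n12 negb_and n2 orbT.
  have m2' : ~~ present (g1 |: (F :\ h1)) (extend c g1 s1) (dst g2) s2.
    apply/negP => /existsP[e /and3P[eF ed /eqP ce]].
    move: eF ce; rewrite !inE ffunE => /predU1P[->|/andP[_ eF]]; rewrite ?eqxx.
      by move=> s12; move/eqP: ns.
    rewrite (negbTE (neq_notin eF n1)) => ce.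
    by move/negP: m2; apply; apply/existsP; exists e; rewrite eF ed ce eqxx.
  have h2F' : h2 \in g1 |: (F :\ h1).
    rewrite !inE h2F andbT orbC; apply/orP; left.
    by apply: (@neq_color c); rewrite c1 c2 eq_sym.
  have c2' : extend c g1 s1 h2 = s2 by rewrite ffunE (negbTE (neq_notin h2F n1)).
  have := optimal_shift_saturated Ho' g2n m2' h2F' i2 c2' (_ : inc h1 _).
  rewrite -Ew other_end_inc => /(_ isT).
  by rewrite !inE eqxx andFb orbF; apply/negP; exact: (neq_notin h1F n1).
Qed.

Lemma sum_incident (A : {set E}) : \sum_(v : V) #|[set e in A | inc e v]| = 2 * #|A|.
Proof.
have sum_eq1 (u : V) : \sum_(v : V) (u == v : nat) = 1.
  by rewrite (bigD1 u) //= eqxx big1 // => v; rewrite eq_sym => /negbTE->.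
have cardE v : #|[set e in A | inc e v]| = \sum_(e in A) (inc e v : nat).
  rewrite -sum1_card big_mkcond [RHS]big_mkcond /=; apply: eq_bigr => e _.
  by rewrite !inE; case: (e \in A); case: (inc e v).
under eq_bigr do rewrite cardE.
rewrite exchange_big /= -[RHS]mulnC -sum_nat_const; apply: eq_bigr => e _.
have -> : \sum_(v : V) (inc e v : nat) = \sum_(v : V) ((src e == v) + (dst e == v)).
  apply: eq_bigr => v _; rewrite /incident.
  case: (eqVneq (src e) v) => [<-|] /=; last by case: (dst e == v).
  by rewrite eq_sym (negbTE (loopless_G e)).
by rewrite big_split /= !sum_eq1.
Qed.

Lemma cubic_card_edges : cubic src dst -> 2 * #|E| = 3 * #|V|.
Proof.
move=> cubic_G; rewrite -cardsT -sum_incident (eq_bigr (fun=> 3)).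
  by rewrite sum_nat_const mulnC.
by move=> v _; rewrite -(cubic_G v); apply: eq_card => e; rewrite !inE.
Qed.

Lemma exists_optimal : exists2 F, (exists c, optimal F c) & nu src dst 3 = #|F|.
Proof.
have colorable0 : colorable set0.
  by apply/colorableP; exists [ffun=> c0] => e f; rewrite inE.
have gt0 : 0 < #|colorable| by apply/card_gt0P; exists set0.
have [F Fcol nuF] := @eq_bigmax_cond _ colorable (fun F => #|F|) gt0.
exists F; last exact: nuF.
case/colorableP: Fcol => c Hc; exists c; split => // F' F'col.
by rewrite -nuF; exact: (@leq_bigmax_cond _ colorable (fun F => #|F|) F' F'col).
Qed.

Definition touched F := [set v | [exists e, (e \notin F) && inc e v]].

Lemma card_touched F c : optimal F c -> #|touched F| = 2 * #|~: F|.
Proof.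
move=> Ho; rewrite -sum_incident -sum1_card big_mkcond /=; apply: eq_bigr => v _.
case: ifP => [|nt].
  rewrite inE => /existsP[e0 /andP[e0F e0v]].
  suff -> : [set e in ~: F | inc e v] = [set e0] by rewrite cards1.
  apply/setP => e; rewrite !inE; apply/andP/eqP => [[eF ev]|->] //.
  exact: optimal_uncolored_matching Ho ev e0v eF e0F.
suff -> : [set e in ~: F | inc e v] = set0 by rewrite cards0.
apply/setP => e; rewrite !inE; apply/negP => /andP[eF ev].
by move/negbT: nt; rewrite inE => /existsP; apply; exists e; rewrite eF.
Qed.

Lemma card_uncolored_le F c : optimal F c -> #|~: F| <= #|~: touched F|.
Proof.
move=> Ho; have inj : {in ~: F &, injective (partner F c)}.
  by move=> g1 g2; rewrite !inE; exact: partner_inj Ho.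
rewrite -(card_in_imset inj); apply: subset_leq_card; apply/subsetP => w.
case/imsetP => g; rewrite inE => gF ->; rewrite !inE; apply/negP.
case/existsP => e /andP[eF ew].
by move/negP: eF; apply; exact: partner_saturated Ho gF ew.
Qed.

End SubcubicColorings.

Theorem theorem3 (V E : finType) (src dst : E -> V) :
  loopless src dst -> cubic src dst ->
  7 * #|V| <= 6 * nu src dst 3.
Proof.
move=> loopless_G cubic_G.
have deg_le3 v : deg src dst v <= 3 by rewrite cubic_G.
have [F [c Ho] ->] := exists_optimal src dst.
have := card_touched loopless_G deg_le3 Ho.
have := card_uncolored_le loopless_G deg_le3 Ho.
have := cubic_card_edges loopless_G cubic_G.
have := cardsC F; have := cardsC (touched src dst F).
lia.
Qed.
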